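(* Consistent Clifford deformations give rise to commuting stabilizers of the surface code.
   Context: Consider the surface code with qubits placed on a rectangular lattice $L$, whose stabilizer group is generated by star operators $A_{\Diamond} = \prod_{i \in \Diamond} X_i$ and plaquette operators $B_{\square} = \prod_{j \in \square} Z_j$, where $\Diamond$ and $\square$ denote cells of four nearest-neighbour qubits forming, respectively, the dual and primal sub-lattices (this is the CSS surface code). A Clifford deformation conjugates each physical qubit $i \in L$ independently by a single-qubit Clifford unitary, which amounts to replacing, on that qubit, each Pauli operator appearing in the stabilizers by another Pauli operator. Denote by $\sigma_i^s$ the (non-identity) Pauli operator measured on qubit $i \in L$ by stabilizer $s$. Each qubit $i$ is surrounded by stabilizers $v_1, v_2$ located vertically from it and stabilizers $h_1, h_2$ located horizontally from it. A Clifford deformation is called consistent if, for every qubit $i$, $\sigma_i^{v_1} = \sigma_i^{v_2} \neq \sigma_i^{h_1} = \sigma_i^{h_2}$. (For example, in the CSS surface code a qubit has $\sigma_i^{v_1} = \sigma_i^{v_2} = X_i$ and $\sigma_i^{h_1} = \sigma_i^{h_2} = Z_i$.) *)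

From HB Require Import structures.
From mathcomp Require Import all_boot all_order all_algebra all_field.
Set Implicit Arguments. Unset Strict Implicit. Unset Printing Implicit Defensive.
Import Order.TTheory GRing.Theory Num.Theory.
Local Open Scope ring_scope.

Inductive pauli := PX | PY | PZ.

Definition pauli_mx (p : pauli) : 'M[algC]_2 :=
  match p with
  | PX => \matrix_(i < 2, j < 2) (if i == j then 0 else 1)
  | PY => \matrix_(i < 2, j < 2)
            (if i == j then 0 else if (i : nat) == 0%N then - 'i else 'i)
  | PZ => \matrix_(i < 2, j < 2)
            (if i == j then (if (i : nat) == 0%N then 1 else -1) else 0)
  end.

(* Qubits sit at the sites (i,j) of a 2(m+1) x 2(n+1) rectangular      *)
(* lattice with periodic boundary conditions.  Stabilizers are the     *)
(* elementary square cells; the cell labelled (a,b) contains the four  *)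
(* qubits (a,b), (a+1,b), (a,b+1), (a+1,b+1).  Cells with a+b even are *)
(* the star (X-type) cells, the others the plaquette (Z-type) cells    *)
(* (checkerboard), i.e. the CSS surface code.                          *)
(* Drawn rotated by 45 degrees (u = i - j, w = i + j), the qubit (i,j) *)
(* has the cell (i,j) directly above it, the cell (i-1,j-1) directly   *)
(* below it (vertical stabilizers v1, v2) and the cells (i-1,j),       *)
(* (i,j-1) directly to its left and right (horizontal stabilizers h1,  *)
(* h2).                                                                 *)
Definition Lx (m : nat) := (m.+1).*2.
Definition Ly (n : nat) := (n.+1).*2.

Definition site (m n : nat) : finType := ('I_(Lx m) * 'I_(Ly n))%type.
Definition qubit m n := site m n.
Definition cell m n := site m n.

Definition in_cell m n (s : cell m n) (q : qubit m n) : bool :=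
  ((q.1 == s.1) || (q.1 == ordS s.1)) && ((q.2 == s.2) || (q.2 == ordS s.2)).

(* original CSS type of a cell (documentation of the undeformed code) *)
Definition css_type m n (s : cell m n) : pauli :=
  if ~~ odd (s.1 + s.2)%N then PX else PZ.

Definition v1 m n (q : qubit m n) : cell m n := (q.1, q.2).
Definition v2 m n (q : qubit m n) : cell m n := (ord_pred q.1, ord_pred q.2).
Definition h1 m n (q : qubit m n) : cell m n := (ord_pred q.1, q.2).
Definition h2 m n (q : qubit m n) : cell m n := (q.1, ord_pred q.2).

(* A deformation: sigma q s is the (non-identity) Pauli operator measured
   on qubit q by the stabilizer s (only meaningful when in_cell s q). *)
Definition deformation m n := qubit m n -> cell m n -> pauli.

Definition consistent m n (sigma : deformation m n) : Prop :=
  forall q : qubit m n,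
    sigma q (v1 q) = sigma q (v2 q) /\
    sigma q (v1 q) <> sigma q (h1 q) /\
    sigma q (h1 q) = sigma q (h2 q).

(* Multi-qubit operators as matrices on the computational basis,       *)
(* indexed by configurations {ffun qubit -> 'I_2}.                     *)
Definition config m n := {ffun qubit m n -> 'I_2}.
Definition operator m n := config m n -> config m n -> algC.

Definition op_mul m n (A B : operator m n) : operator m n :=
  fun x z => \sum_(y : config m n) A x y * B y z.

Definition op_commute m n (A B : operator m n) : Prop :=
  forall x z, op_mul A B x z = op_mul B A x z.

Definition tensor m n (P : qubit m n -> 'M[algC]_2) : operator m n :=
  fun x y => \prod_(q : qubit m n) P q (x q) (y q).

Definition deformed_stab m n (sigma : deformation m n) (s : cell m n)
  : operator m n :=
  tensor (fun q => if in_cell s q then pauli_mx (sigma q s) else 1%:M).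

From mathcomp Require Import all_boot all_order all_algebra all_field.
From mathcomp Require Import ring.
Set Implicit Arguments. Unset Strict Implicit. Unset Printing Implicit Defensive.
Import Order.TTheory GRing.Theory Num.Theory.
Local Open Scope ring_scope.

(* Two tensor products of single-qubit Paulis commute up to the product of the
   local commutation signs, and a local sign is -1 exactly on qubits where the
   two stabilizers act by different Paulis.  Consistency makes the Pauli that a
   cell s measures on a qubit q depend only on whether s is vertical or
   horizontal to q, and on the checkerboard this is decided by the parity of
   the cell, odd (s.1 + s.2).  Hence two cells of the same parity commute
   qubit-wise, while two cells of opposite parity share a row or column parity,
   so their common qubits form a product of sets one of which has 0 or 2
   elements: the number of anticommuting qubits is even. *)

Section Tensor.

Variables m n : nat.

Lemma tensor_mul (P Q : qubit m n -> 'M[algC]_2) x z :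
  op_mul (tensor P) (tensor Q) x z = tensor (fun q => P q *m Q q) x z.
Proof.
rewrite /op_mul /tensor.
rewrite (eq_bigr (fun y : config m n => \prod_q (P q (x q) (y q) * Q q (y q) (z q))));
  last by move=> y _; rewrite big_split.
rewrite -(bigA_distr_bigA (fun q k => P q (x q) k * Q q k (z q))).
by apply: eq_bigr => q _; rewrite mxE.
Qed.

Lemma tensor_scale (e : qubit m n -> algC) (P : qubit m n -> 'M[algC]_2) x z :
  tensor (fun q => e q *: P q) x z = (\prod_q e q) * tensor P x z.
Proof. by rewrite /tensor -big_split; apply: eq_bigr => q _; rewrite mxE. Qed.

Lemma tensor_commute_up_to (P Q : qubit m n -> 'M[algC]_2) (e : qubit m n -> algC) :
  (forall q, P q *m Q q = e q *: (Q q *m P q)) ->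
  forall x z, op_mul (tensor P) (tensor Q) x z
              = (\prod_q e q) * op_mul (tensor Q) (tensor P) x z.
Proof.
move=> ePQ x z; rewrite !tensor_mul -tensor_scale.
by rewrite /tensor; apply: eq_bigr => q _; rewrite ePQ.
Qed.

End Tensor.

Lemma prod_sign_card (R : pzRingType) (T : finType) (A : pred T) :
  \prod_(i : T) (if A i then -1 else 1 : R) = (-1) ^+ #|A|.
Proof. by rewrite -big_mkcond prodr_const. Qed.

Definition pauli_sign (p1 p2 : pauli) : algC :=
  match p1, p2 with PX, PX | PY, PY | PZ, PZ => 1 | _, _ => -1 end.

Lemma pauli_sign_id p : pauli_sign p p = 1.
Proof. by case: p. Qed.

Lemma pauli_sign_neq p1 p2 : p1 <> p2 -> pauli_sign p1 p2 = -1.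
Proof. by case: p1; case: p2. Qed.

Lemma pauli_mx_comm p1 p2 :
  pauli_mx p1 *m pauli_mx p2 = pauli_sign p1 p2 *: (pauli_mx p2 *m pauli_mx p1).
Proof.
have i_mul_i : ('i : algC) * 'i = -1 by rewrite -expr2 sqrCi.
case: p1; case: p2; apply/matrixP => i j;
  rewrite !mxE !big_ord_recr !big_ord0 /= !mxE;
  case: i => [[|[|//]] ?]; case: j => [[|[|//]] ?]; rewrite /= ?i_mul_i; ring.
Qed.

Section EvenCycle.

Variables (k : nat) (k_even : ~~ odd k).

Lemma odd_ordS (i : 'I_k) : odd (ordS i) = ~~ odd i.
Proof. by rewrite /= odd_mod ?(negbTE k_even). Qed.

Lemma ordS_neq (i : 'I_k) : (ordS i == i) = false.
Proof.
apply/negbTE/negP => /eqP/(congr1 (fun j : 'I_k => odd j)).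
by rewrite odd_ordS; case: (odd i).
Qed.

Lemma eq_ord_odd (i j : 'I_k) : (i == j) || (i == ordS j) ->
  (i == j) = (odd i == odd j).
Proof.
case/orP => /eqP ->; first by rewrite !eqxx.
by rewrite ordS_neq odd_ordS; case: (odd j).
Qed.

Lemma card_common_neighbours_even (a b : 'I_k) : odd a = odd b ->
  ~~ odd #|[pred i : 'I_k | ((i == a) || (i == ordS a)) && ((i == b) || (i == ordS b))]|.
Proof.
move=> ab_odd; have [<-|ab_neq] := eqVneq a b.
  rewrite (@eq_card _ _ (pred2 a (ordS a))) => [|i]; last by rewrite !inE andbb.
  by rewrite card2 eq_sym ordS_neq.
rewrite eq_card0 // => i; rewrite !inE.
apply/negbTE/negP => /andP[/orP[]/eqP-> /orP[]/eqP].
- by move/eqP; rewrite (negbTE ab_neq).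
- by move/(congr1 (fun j : 'I_k => odd j)); rewrite odd_ordS ab_odd; case: (odd b).
- by move/(congr1 (fun j : 'I_k => odd j)); rewrite odd_ordS ab_odd; case: (odd b).
- by move/ordS_inj/eqP; rewrite (negbTE ab_neq).
Qed.

End EvenCycle.

Section Lattice.

Variables m n : nat.

Lemma Lx_even : ~~ odd (Lx m). Proof. by rewrite odd_double. Qed.
Lemma Ly_even : ~~ odd (Ly n). Proof. by rewrite odd_double. Qed.

Definition vertical_at (q : qubit m n) (s : cell m n) : bool :=
  (q.1 == s.1) == (q.2 == s.2).

Lemma vertical_atE (s : cell m n) (q : qubit m n) : in_cell s q ->
  vertical_at q s = (odd (s.1 + s.2) == odd (q.1 + q.2)).
Proof.
case/andP => near1 near2.
rewrite /vertical_at (eq_ord_odd Lx_even near1) (eq_ord_odd Ly_even near2) !oddD.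
by case: (odd q.1); case: (odd q.2); case: (odd s.1); case: (odd s.2).
Qed.

Lemma consistent_in_cell (sigma : deformation m n) (s : cell m n) (q : qubit m n) :
  consistent sigma -> in_cell s q ->
  sigma q s = if vertical_at q s then sigma q (v1 q) else sigma q (h1 q).
Proof.
case: q s => [q1 q2] [s1 s2] /(_ (q1, q2)) [e_v [_ e_h]].
rewrite /in_cell /vertical_at /=.
have ordS_neq1 := ordS_neq Lx_even; have ordS_neq2 := ordS_neq Ly_even.
case/andP => /orP[]/eqP q1E /orP[]/eqP q2E; subst q1 q2;
  rewrite /= ?eqxx ?ordS_neq1 ?ordS_neq2 //=.
- by rewrite e_h /h2 /= ordSK.
- by rewrite /h1 /= ordSK.
- by rewrite e_v /v2 /= !ordSK.
Qed.

Definition anticommute_at (s t : cell m n) (q : qubit m n) : bool :=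
  [&& in_cell s q, in_cell t q & odd (s.1 + s.2) != odd (t.1 + t.2)].

Definition stab_factor (sigma : deformation m n) (s : cell m n) (q : qubit m n) :=
  if in_cell s q then pauli_mx (sigma q s) else 1%:M.

Lemma stab_factor_comm (sigma : deformation m n) (s t : cell m n) (q : qubit m n) :
  consistent sigma ->
  stab_factor sigma s q *m stab_factor sigma t q
  = (if anticommute_at s t q then -1 else 1) *:
      (stab_factor sigma t q *m stab_factor sigma s q).
Proof.
move=> hc; rewrite /stab_factor /anticommute_at.
case sq: (in_cell s q); case tq: (in_cell t q) => /=;
  rewrite ?mul1mx ?mulmx1 ?scale1r // pauli_mx_comm.
congr (_ *: _); have [_ [vh_neq _]] := hc q.
rewrite (consistent_in_cell hc sq) (consistent_in_cell hc tq).
rewrite (vertical_atE sq) (vertical_atE tq).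
case: (odd (s.1 + s.2)); case: (odd (t.1 + t.2)); case: (odd (q.1 + q.2)) => /=;
  by rewrite ?pauli_sign_id ?pauli_sign_neq // => /esym.
Qed.

Lemma card_anticommute_even (s t : cell m n) : ~~ odd #|anticommute_at s t|.
Proof.
have [st_eq|st_neq] := eqVneq (odd (s.1 + s.2)) (odd (t.1 + t.2)).
  by rewrite eq_card0 // => q; rewrite unfold_in /anticommute_at st_eq eqxx !andbF.
pose common k (a b : 'I_k) := [pred i : 'I_k | ((i == a) || (i == ordS a)) && ((i == b) || (i == ordS b))].
have -> : #|anticommute_at s t| = #|[predX common _ s.1 t.1 & common _ s.2 t.2]|.
  by apply: eq_card => q; rewrite unfold_in !inE /anticommute_at /in_cell st_neq andbT andbACA.
rewrite cardX oddM negb_and.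
move: st_neq; rewrite !oddD.
have [par1|par1] := eqVneq (odd s.1) (odd t.1).
  by rewrite (card_common_neighbours_even Lx_even par1).
have [par2|par2] := eqVneq (odd s.2) (odd t.2).
  by rewrite (card_common_neighbours_even Ly_even par2) orbT.
by move: par1 par2; case: (odd s.1); case: (odd s.2); case: (odd t.1); case: (odd t.2).
Qed.

End Lattice.

Theorem lemma1 (m n : nat) (sigma : deformation m n) :
  consistent sigma ->
  forall s t : cell m n,
    op_commute (deformed_stab sigma s) (deformed_stab sigma t).
Proof.
move=> hc s t x z.
rewrite (tensor_commute_up_to (fun q => stab_factor_comm s t q hc)).
by rewrite prod_sign_card -signr_odd (negbTE (card_anticommute_even s t)) mul1r.
Qed.
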